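(* The smallest constant $\sigma_{2,0}$ such that $\|f-P_2(f)\|_{C^0}\le\sigma_{2,0}\|f'\|_{C^0}$ for all $f\in C^1([-1,1],\mathbb{C})$ equals $$\frac{14\sqrt7-20}{27}\ (\approx0.6311).$$ Equivalently, with the notation below, $\max_{t\in[-1,1],y\in\Omega_2}\max\big(\overline{\varphi}_2(y)(t)-P_2(y)(t),\,P_2(y)(t)-\underline{\varphi}_2(y)(t)\big)=\frac{14\sqrt7-20}{27}$.
   Context: $P_2$ maps a continuous function on $[-1,1]$ to its polynomial interpolant of degree $\le2$ at the Chebyshev points $t_0=1,t_1=0,t_2=-1$; for $y\in\mathbb{R}^3$, $P_2(y)$ is the polynomial of degree $\le2$ with $P_2(y)(t_k)=y_k$. $\|\cdot\|_{C^0}$ is the sup norm on $[-1,1]$. $\Omega_2=\{y\in\mathbb{R}^3:|y_k|\le|t_k|,\ |y_{k+1}-y_k|\le|t_{k+1}-t_k|\}$. For $y\in\Omega_2$ and $t$ between $t_{k^*}$ and $t_{k^*+1}$: $\overline{\varphi}_2(y)(t)=\min\{y_{k^*}+t-t_{k^*},\,y_{k^*+1}-t+t_{k^*+1},\,|t|\}$ and $\underline{\varphi}_2(y)(t)=\max\{y_{k^*}-t+t_{k^*},\,y_{k^*+1}+t-t_{k^*+1},\,-|t|\}$. *)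

From Stdlib Require Import Reals.
From Coquelicot Require Import Coquelicot.
Open Scope R_scope.

Definition I11 (t : R) : Prop := -1 <= t <= 1.

Definition supnormC (g : R -> C) : R :=
  real (Lub_Rbar (fun r => exists t, I11 t /\ r = Cmod (g t))).

Definition is_deriv_on_I11 (g g' : R -> C) : Prop :=
  forall t, I11 t ->
    filterlim (fun s => ((g s - g t) / RtoC (s - t))%C)
      (within (fun s => I11 s /\ s <> t) (locally t)) (locally (g' t)).

Definition continuous_on_I11 (g : R -> C) : Prop :=
  forall t, I11 t -> filterlim g (within I11 (locally t)) (locally (g t)).

(* Chebyshev points t_0 = 1, t_1 = 0, t_2 = -1 and the Lagrange
   interpolant of degree <= 2 through values y0, y1, y2 at them. *)
Definition P2vals (y0 y1 y2 : C) (t : R) : C :=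
  (RtoC (t * (t + 1) / 2) * y0 + RtoC (1 - t * t) * y1
   + RtoC (t * (t - 1) / 2) * y2)%C.

Definition P2 (f : R -> C) : R -> C := P2vals (f 1) (f 0) (f (-1)).

Definition admissible_sigma (sigma : R) : Prop :=
  forall f f' : R -> C, is_deriv_on_I11 f f' -> continuous_on_I11 f' ->
    supnormC (fun t => (f t - P2 f t)%C) <= sigma * supnormC f'.

Definition P2r (y0 y1 y2 : R) (t : R) : R :=
  t * (t + 1) / 2 * y0 + (1 - t * t) * y1 + t * (t - 1) / 2 * y2.

(* Omega_2 = { y : |y_k| <= |t_k|, |y_{k+1} - y_k| <= |t_{k+1} - t_k| }. *)
Definition Omega2 (y0 y1 y2 : R) : Prop :=
  Rabs y0 <= Rabs 1 /\ Rabs y1 <= Rabs 0 /\ Rabs y2 <= Rabs (-1) /\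
  Rabs (y1 - y0) <= Rabs (0 - 1) /\ Rabs (y2 - y1) <= Rabs (-1 - 0).

(* For t between t_{k} and t_{k+1} (k = 0 for t in [0,1], k = 1 for
   t in [-1,0]):  upper envelope min{y_k + |t - t_k|, y_{k+1} + |t - t_{k+1}|, |t|}
   and lower envelope max{y_k - |t - t_k|, y_{k+1} - |t - t_{k+1}|, -|t|}. *)
Definition phi_up (y0 y1 y2 t : R) : R :=
  if Rle_dec 0 t then Rmin (Rmin (y0 + Rabs (t - 1)) (y1 + Rabs (t - 0))) (Rabs t)
  else Rmin (Rmin (y1 + Rabs (t - 0)) (y2 + Rabs (t - -1))) (Rabs t).

Definition phi_low (y0 y1 y2 t : R) : R :=
  if Rle_dec 0 t then Rmax (Rmax (y0 - Rabs (t - 1)) (y1 - Rabs (t - 0))) (- Rabs t)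
  else Rmax (Rmax (y1 - Rabs (t - 0)) (y2 - Rabs (t - -1))) (- Rabs t).

Definition gap2 (y0 y1 y2 t : R) : R :=
  Rmax (phi_up y0 y1 y2 t - P2r y0 y1 y2 t) (P2r y0 y1 y2 t - phi_low y0 y1 y2 t).

(* For data compatible with an L-Lipschitz function g with
   g(0) = 0 (|Y0|,|Y2| <= L, and the value V at t within L|t - s| of the value at
   the nodes s = 0 and s = sign t), the interpolation error V - P2(Y0,0,Y2)(t) is
   bounded by L (2|t| - t^2 - |t|^3) <= sigma20 L, the cubic being maximal at
   T = tstar = (sqrt 7 - 1)/3 (gap_right, gap_left).  This bounds gap2 on Omega2 and, by
   subtracting g(0), the interpolation error of any Lipschitz function.  The data
   (2T - 1, 0, 1) at t = T show the bound is sharp.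

   For complex f in C^1, project onto the direction of the error
   z = f(t) - P2 f(t): g = Re(conj z f) is (|z| ||f'||)-Lipschitz by the mean value
   inequality and has interpolation error |z|^2 at t.

   Smoothing the extremal kink function x |-> T - x + |x| - |x - T|
   with sqrt(u^2 + e^2) gives real C^1 functions with |F'| <= 1 whose interpolation
   error at T is at least sigma20 - 4e. *)

From Stdlib Require Import Reals Lra Psatz.
From Coquelicot Require Import Coquelicot.
Open Scope R_scope.

(* The optimal constant sigma_{2,0} and the point T = tstar = (sqrt 7 - 1)/3 where it is attained. *)
Definition sigma20 : R := (14 * sqrt 7 - 20) / 27.
Definition tstar : R := (sqrt 7 - 1) / 3.

Lemma sqrt7_sq : sqrt 7 * sqrt 7 = 7.
Proof. apply sqrt_sqrt; lra. Qed.

Lemma sqrt7_bounds : 2.6 < sqrt 7 < 2.7.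
Proof. pose proof sqrt7_sq; pose proof (sqrt_pos 7); split; nra. Qed.

Lemma tstar_bounds : 0.53 < tstar < 0.57.
Proof. pose proof sqrt7_bounds; unfold tstar; lra. Qed.

Lemma sigma20_pos : 0 < sigma20.
Proof. pose proof sqrt7_bounds; unfold sigma20; lra. Qed.

(* T is the positive critical point of the cubic 2t - t^2 - t^3, ... *)
Lemma tstar_critical : 3 * tstar ^ 2 + 2 * tstar - 2 = 0.
Proof. unfold tstar. replace 0 with ((sqrt 7 * sqrt 7 - 7) / 3) by (rewrite sqrt7_sq; field). field. Qed.

Lemma cubic_tstar : 2 * tstar - tstar ^ 2 - tstar ^ 3 = sigma20.
Proof.
  unfold sigma20. replace (sqrt 7) with (3 * tstar + 1) by (unfold tstar; field).
  pose proof tstar_critical. nra.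
Qed.

(* ... and which is its maximum on [-1, +oo):
   sigma20 - c(t) = (t - T)^2 (t + 1 + 2T). *)
Lemma cubic_le_sigma20 t : -1 <= t -> 2 * t - t ^ 2 - t ^ 3 <= sigma20.
Proof.
  intros Ht. pose proof tstar_bounds. pose proof tstar_critical.
  rewrite <- cubic_tstar.
  assert (E : (2 * tstar - tstar ^ 2 - tstar ^ 3) - (2 * t - t ^ 2 - t ^ 3)
              = (t - tstar) ^ 2 * (t + 1 + 2 * tstar) + (t - tstar) * (3 * tstar ^ 2 + 2 * tstar - 2)) by ring.
  assert (0 <= (t - tstar) ^ 2 * (t + 1 + 2 * tstar)) by (apply Rmult_le_pos; [apply pow2_ge_0 | lra]).
  nra.
Qed.

(* -1 is a real literal, not an opposite, so Rabs_Ropp does not apply to it. *)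
Lemma Rabs_m1 : Rabs (-1) = 1.
Proof. rewrite Rabs_Zabs; reflexivity. Qed.

(* The error is a
   convex combination of V, V - Y0 and Y2 whose bound is L (2t - t^2 - t^3). *)
Lemma gap_right L t Y0 Y2 V : 0 <= L -> 0 <= t <= 1 ->
  -L <= Y0 <= L -> -L <= Y2 <= L -> V <= Y0 + L * (1 - t) -> V <= L * t ->
  V - P2r Y0 0 Y2 t <= sigma20 * L.
Proof.
  intros HL Ht HY0 HY2 HV0 HVt.
  set (A := t * (t + 1) / 2). set (B := t * (1 - t) / 2).
  assert (HA : 0 <= A <= 1) by (unfold A; nra).
  assert (HB : 0 <= B) by (unfold B; nra).
  assert (Split : V - P2r Y0 0 Y2 t = (1 - A) * V + A * (V - Y0) + B * Y2)
    by (unfold P2r, A, B; field).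
  assert (Sum : (1 - A) * (L * t) + A * (L * (1 - t)) + B * L = L * (2 * t - t ^ 2 - t ^ 3))
    by (unfold A, B; field).
  assert ((1 - A) * V <= (1 - A) * (L * t)) by (apply Rmult_le_compat_l; lra).
  assert (A * (V - Y0) <= A * (L * (1 - t))) by (apply Rmult_le_compat_l; lra).
  assert (B * Y2 <= B * L) by (apply Rmult_le_compat_l; lra).
  assert (L * (2 * t - t ^ 2 - t ^ 3) <= L * sigma20)
    by (apply Rmult_le_compat_l; [lra | apply cubic_le_sigma20; lra]).
  lra.
Qed.

(* The mirror image, t in [-1,0], via P2(Y0,0,Y2)(t) = P2(Y2,0,Y0)(-t). *)
Lemma gap_left L t Y0 Y2 V : 0 <= L -> -1 <= t <= 0 ->
  -L <= Y0 <= L -> -L <= Y2 <= L -> V <= Y2 + L * (1 + t) -> V <= L * (- t) ->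
  V - P2r Y0 0 Y2 t <= sigma20 * L.
Proof.
  intros. replace (P2r Y0 0 Y2 t) with (P2r Y2 0 Y0 (- t)) by (unfold P2r; field).
  apply gap_right; lra.
Qed.

(* Interpolation error of a K-Lipschitz function on [-1,1]; subtracting g(0)
   reduces it to the core estimate. *)
Lemma lipschitz_interp_error (g : R -> R) K t :
  (forall a b, I11 a -> I11 b -> Rabs (g b - g a) <= K * Rabs (b - a)) -> I11 t ->
  g t - P2r (g 1) (g 0) (g (-1)) t <= sigma20 * K.
Proof.
  intros Lip Ht.
  assert (Lip' : forall a b, I11 a -> I11 b -> - (K * Rabs (b - a)) <= g b - g a <= K * Rabs (b - a))
    by (intros a b Ha Hb; apply Rabs_le_between, Lip; assumption).
  assert (I1 : I11 1) by (unfold I11; lra).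
  assert (I0 : I11 0) by (unfold I11; lra).
  assert (Im1 : I11 (-1)) by (unfold I11; lra).
  pose proof (Lip' 0 1 I0 I1) as L1. pose proof (Lip' 0 (-1) I0 Im1) as Lm1.
  pose proof (Lip' 1 t I1 Ht) as Lt1. pose proof (Lip' (-1) t Im1 Ht) as Ltm1.
  pose proof (Lip' 0 t I0 Ht) as Lt0.
  rewrite Rminus_0_r, Rabs_R1 in L1. rewrite Rminus_0_r, Rabs_m1 in Lm1.
  rewrite Rminus_0_r in Lt0.
  assert (HK : 0 <= K) by lra.
  replace (g t - P2r (g 1) (g 0) (g (-1)) t)
    with ((g t - g 0) - P2r (g 1 - g 0) 0 (g (-1) - g 0) t) by (unfold P2r; field).
  destruct Ht as [Ht1 Ht2]. destruct (Rle_dec 0 t) as [Hp | Hn].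
  - rewrite Rabs_right in Lt0 by lra. rewrite Rabs_left1 in Lt1 by lra.
    apply gap_right; lra.
  - rewrite Rabs_left in Lt0 by lra. rewrite Rabs_right in Ltm1 by lra.
    apply gap_left; lra.
Qed.

(* The Lagrange weights at the three nodes are bounded by 1 on [-1,1]. *)
Lemma P2r_bound a b c x m : Rabs a <= m -> Rabs b <= m -> Rabs c <= m -> I11 x ->
  Rabs (P2r a b c x) <= 3 * m.
Proof.
  intros Ha Hb Hc [Hx1 Hx2]. unfold P2r.
  assert (C0 : Rabs (x * (x + 1) / 2) <= 1) by (apply Rabs_le; nra).
  assert (C1 : Rabs (1 - x * x) <= 1) by (apply Rabs_le; nra).
  assert (C2 : Rabs (x * (x - 1) / 2) <= 1) by (apply Rabs_le; nra).
  assert (Term : forall w y, Rabs w <= 1 -> Rabs y <= m -> Rabs (w * y) <= m).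
  { intros w y Hw Hy. rewrite Rabs_mult.
    pose proof (Rabs_pos w). pose proof (Rabs_pos y). nra. }
  pose proof (Term _ _ C0 Ha). pose proof (Term _ _ C1 Hb). pose proof (Term _ _ C2 Hc).
  pose proof (Rabs_triang (x * (x + 1) / 2 * a + (1 - x * x) * b) (x * (x - 1) / 2 * c)).
  pose proof (Rabs_triang (x * (x + 1) / 2 * a) ((1 - x * x) * b)).
  lra.
Qed.

Lemma Omega2_shape y0 y1 y2 : Omega2 y0 y1 y2 -> y1 = 0 /\ -1 <= y0 <= 1 /\ -1 <= y2 <= 1.
Proof.
  intros (H0 & H1 & H2 & _).
  rewrite Rabs_R1 in H0. rewrite Rabs_R0 in H1. rewrite Rabs_m1 in H2.
  split; [| split; apply Rabs_le_between; assumption].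
  apply Rabs_eq_0. pose proof (Rabs_pos y1). lra.
Qed.

Lemma Rmin3_le a b c : Rmin (Rmin a b) c <= a /\ Rmin (Rmin a b) c <= b /\ Rmin (Rmin a b) c <= c.
Proof. unfold Rmin; repeat destruct Rle_dec; lra. Qed.

Lemma Rmax3_ge a b c : a <= Rmax (Rmax a b) c /\ b <= Rmax (Rmax a b) c /\ c <= Rmax (Rmax a b) c.
Proof. unfold Rmax; repeat destruct Rle_dec; lra. Qed.

(* Upper bound of the discrete problem: the envelopes phi_up, phi_low satisfy
   exactly the constraints of the core estimate (with L = 1); the lower gap is
   the upper gap of the negated data. *)
Lemma gap2_le y0 y1 y2 t : Omega2 y0 y1 y2 -> I11 t -> gap2 y0 y1 y2 t <= sigma20.
Proof.
  intros Hy [Ht1 Ht2]. destruct (Omega2_shape _ _ _ Hy) as (-> & H0 & H2).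
  assert (Hopp : forall M, P2r y0 0 y2 t - M = - M - P2r (- y0) 0 (- y2) t)
    by (intros; unfold P2r; ring).
  rewrite <- (Rmult_1_r sigma20). unfold gap2, phi_up, phi_low.
  destruct (Rle_dec 0 t) as [Hp | Hn].
  - assert (Rabs (t - 1) = 1 - t) by (rewrite Rabs_left1; lra).
    assert (Rabs t = t) by (rewrite Rabs_right; lra).
    destruct (Rmin3_le (y0 + Rabs (t - 1)) (0 + Rabs (t - 0)) (Rabs t)) as (U0 & _ & Ut).
    destruct (Rmax3_ge (y0 - Rabs (t - 1)) (0 - Rabs (t - 0)) (- Rabs t)) as (W0 & _ & Wt).
    apply Rmax_lub; [| rewrite Hopp]; apply gap_right; lra.
  - assert (Rabs (t - -1) = 1 + t) by (rewrite Rabs_right; lra).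
    assert (Rabs t = - t) by (rewrite Rabs_left; lra).
    destruct (Rmin3_le (0 + Rabs (t - 0)) (y2 + Rabs (t - -1)) (Rabs t)) as (_ & U2 & Ut).
    destruct (Rmax3_ge (0 - Rabs (t - 0)) (y2 - Rabs (t - -1)) (- Rabs t)) as (_ & W2 & Wt).
    apply Rmax_lub; [| rewrite Hopp]; apply gap_left; lra.
Qed.

Lemma extremal_gap : tstar - P2r (2 * tstar - 1) 0 1 tstar = sigma20.
Proof. rewrite <- cubic_tstar. unfold P2r. field. Qed.

(* At the extremal data the upper envelope equals T, so the bound is attained. *)
Lemma gap2_attained : exists y0 y1 y2 t, Omega2 y0 y1 y2 /\ I11 t /\ gap2 y0 y1 y2 t = sigma20.
Proof.
  pose proof tstar_bounds as HT.
  assert (Hy : Omega2 (2 * tstar - 1) 0 1).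
  { unfold Omega2. replace (0 - 1) with (-1) by ring.
    rewrite !Rminus_0_r, Rminus_0_l, Rabs_Ropp, Rabs_m1, Rabs_R1, Rabs_R0.
    repeat split; try apply Rabs_le; lra. }
  assert (Ht : I11 tstar) by (unfold I11; lra).
  assert (Up : phi_up (2 * tstar - 1) 0 1 tstar = tstar).
  { unfold phi_up. destruct (Rle_dec 0 tstar); [| lra].
    rewrite (Rabs_left1 (tstar - 1)), Rminus_0_r, (Rabs_right tstar) by lra.
    unfold Rmin; repeat destruct Rle_dec; lra. }
  exists (2 * tstar - 1), 0, 1, tstar. split; [exact Hy | split; [exact Ht |]].
  apply Rle_antisym; [apply gap2_le; assumption |].
  unfold gap2. rewrite Up, extremal_gap. apply Rmax_l.
Qed.

Lemma supnormC_ge (g : R -> C) m t :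
  (forall x, I11 x -> Cmod (g x) <= m) -> I11 t -> Cmod (g t) <= supnormC g.
Proof.
  intros Hm Ht. unfold supnormC.
  destruct (Lub_Rbar_correct (fun r => exists t, I11 t /\ r = Cmod (g t))) as [Hub Hlub].
  pose proof (Hub (Cmod (g t)) (ex_intro _ t (conj Ht eq_refl))) as Hge.
  assert (Hle : Rbar_le (Lub_Rbar (fun r => exists t, I11 t /\ r = Cmod (g t))) m)
    by (apply Hlub; intros r (x & Hx & ->); apply Hm, Hx).
  destruct (Lub_Rbar _); simpl in *; easy.
Qed.

Lemma supnormC_le (g : R -> C) b : (forall x, I11 x -> Cmod (g x) <= b) -> supnormC g <= b.
Proof.
  intros Hb. unfold supnormC.
  destruct (Lub_Rbar_correct (fun r => exists t, I11 t /\ r = Cmod (g t))) as [Hub Hlub].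
  assert (H0 : I11 0) by (unfold I11; lra).
  pose proof (Hub (Cmod (g 0)) (ex_intro _ 0 (conj H0 eq_refl))) as Hge.
  assert (Hle : Rbar_le (Lub_Rbar (fun r => exists t, I11 t /\ r = Cmod (g t))) b)
    by (apply Hlub; intros r (x & Hx & ->); apply Hb, Hx).
  destruct (Lub_Rbar _); simpl in *; easy.
Qed.

(* Projection of R onto [-1,1]; composing with it turns one-sided properties on
   [-1,1] into properties on all of R, where the library's theorems apply. *)
Definition clamp (x : R) : R := Rmax (-1) (Rmin 1 x).

Lemma clamp_I11 x : I11 (clamp x).
Proof. unfold clamp, I11, Rmax, Rmin. repeat destruct Rle_dec; lra. Qed.

Lemma clamp_id x : I11 x -> clamp x = x.
Proof. unfold clamp, I11, Rmax, Rmin. intros. repeat destruct Rle_dec; lra. Qed.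

Lemma clamp_lipschitz x y : Rabs (clamp y - clamp x) <= Rabs (y - x).
Proof.
  unfold clamp, Rmax, Rmin. repeat destruct Rle_dec; unfold Rabs; repeat destruct Rcase_abs; lra.
Qed.

Lemma clamp_continuous {V : UniformSpace} (h : R -> V) x :
  filterlim h (within I11 (locally (clamp x))) (locally (h (clamp x))) ->
  filterlim (fun y => h (clamp y)) (locally x) (locally (h (clamp x))).
Proof.
  intros Hh. apply (filterlim_comp _ _ _ clamp h _ (within I11 (locally (clamp x)))); [| exact Hh].
  intros P [eps HP]. exists eps. intros y Hy. apply HP; [| apply clamp_I11].
  apply (Rle_lt_trans _ _ _ (clamp_lipschitz x y)), Hy.
Qed.

Lemma continuous_on_I11_bounded (g : R -> C) :
  continuous_on_I11 g -> exists m, forall x, I11 x -> Cmod (g x) <= m.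
Proof.
  intros Hg.
  destruct (bounded_continuity (K := C_AbsRing) (V := C_NormedModule)
    (fun y => g (clamp y)) (-1) 1) as [M HM].
  - intros x _. apply clamp_continuous, Hg, clamp_I11.
  - exists M. intros x Hx. rewrite <- (clamp_id x Hx). apply Rlt_le, HM, Hx.
Qed.

Definition deriv_on_I11 (g dg : R -> R) : Prop :=
  forall t, I11 t ->
    filterlim (fun s => (g s - g t) / (s - t))
      (within (fun s => I11 s /\ s <> t) (locally t)) (locally (dg t)).

Lemma within_limit_eps (h : R -> R) (D : R -> Prop) t l :
  filterlim h (within D (locally t)) (locally l) ->
  forall eps, 0 < eps -> exists d, 0 < d /\
    forall s, D s -> Rabs (s - t) < d -> Rabs (h s - l) < eps.
Proof.
  intros Hh eps Heps.
  destruct (proj1 (filterlim_locally h l) Hh (mkposreal eps Heps)) as [d Hd].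
  exists d. split; [apply cond_pos |]. intros s Ds Hs. exact (Hd s Hs Ds).
Qed.

Lemma deriv_on_I11_continuous g dg : deriv_on_I11 g dg ->
  forall t, I11 t -> filterlim g (within I11 (locally t)) (locally (g t)).
Proof.
  intros Hg t Ht. apply filterlim_locally. intros [eps Heps].
  destruct (within_limit_eps _ _ _ _ (Hg t Ht) 1 Rlt_0_1) as (d & Hd & Hq).
  set (K := Rabs (dg t) + 1).
  assert (HK : 0 < K) by (unfold K; pose proof (Rabs_pos (dg t)); lra).
  assert (Hm : 0 < Rmin d (eps / K)) by (apply Rmin_glb_lt; [lra | apply Rdiv_lt_0_compat; lra]).
  exists (mkposreal _ Hm). intros s Hs Is. simpl in Hs.
  change (Rabs (g s - g t) < eps).
  destruct (Req_dec s t) as [-> | Hne]; [rewrite Rminus_diag, Rabs_R0; exact Heps |].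
  assert (Hq' : Rabs ((g s - g t) / (s - t)) <= K).
  { specialize (Hq s (conj Is Hne) (Rlt_le_trans _ _ _ Hs (Rmin_l _ _))).
    pose proof (Rabs_triang_inv ((g s - g t) / (s - t)) (dg t)). unfold K; lra. }
  assert (Hst : K * Rabs (s - t) < eps).
  { apply (Rlt_le_trans _ (K * (eps / K))); [| right; field; lra].
    apply Rmult_lt_compat_l; [lra | exact (Rlt_le_trans _ _ _ Hs (Rmin_r _ _))]. }
  replace (g s - g t) with ((g s - g t) / (s - t) * (s - t)) by (field; lra).
  rewrite Rabs_mult. pose proof (Rabs_pos (s - t)). nra.
Qed.

Lemma deriv_on_I11_is_derive g dg x : deriv_on_I11 g dg -> -1 < x < 1 ->
  is_derive (fun y => g (clamp y)) x (dg x).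
Proof.
  intros Hg Hx. apply is_derive_Reals. intros eps Heps.
  assert (Ix : I11 x) by (unfold I11; lra).
  destruct (within_limit_eps _ _ _ _ (Hg x Ix) eps Heps) as (d & Hd & Hq).
  assert (Hm : 0 < Rmin d (Rmin (1 - x) (x + 1))) by (repeat apply Rmin_glb_lt; lra).
  exists (mkposreal _ Hm). intros h Hh0 Hh. simpl in Hh.
  pose proof (Rmin_l d (Rmin (1 - x) (x + 1))). pose proof (Rmin_r d (Rmin (1 - x) (x + 1))).
  pose proof (Rmin_l (1 - x) (x + 1)). pose proof (Rmin_r (1 - x) (x + 1)).
  assert (Ixh : I11 (x + h)) by (apply Rabs_def2 in Hh; unfold I11; lra).
  rewrite (clamp_id _ Ixh), (clamp_id _ Ix).
  replace h with (x + h - x) at 2 by ring.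
  apply Hq; [split; [exact Ixh | lra] | replace (x + h - x) with h by ring; lra].
Qed.

Lemma mean_value_ineq g dg K a b : deriv_on_I11 g dg ->
  (forall x, I11 x -> Rabs (dg x) <= K) -> I11 a -> I11 b ->
  Rabs (g b - g a) <= K * Rabs (b - a).
Proof.
  intros Hg HK [Ha1 Ha2] [Hb1 Hb2].
  assert (Hmin : -1 <= Rmin a b) by (apply Rmin_glb; lra).
  assert (Hmax : Rmax a b <= 1) by (apply Rmax_lub; lra).
  destruct (MVT_gen (fun y => g (clamp y)) a b dg) as (c & [Hc1 Hc2] & Heq).
  - intros x [Hx1 Hx2]. apply deriv_on_I11_is_derive; [exact Hg | lra].
  - intros x _. apply continuity_pt_filterlim, clamp_continuous,
      (deriv_on_I11_continuous g dg Hg), clamp_I11.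
  - simpl in Heq. rewrite (clamp_id a), (clamp_id b) in Heq by (unfold I11; lra).
    rewrite Heq, Rabs_mult. apply Rmult_le_compat_r; [apply Rabs_pos |].
    apply HK. unfold I11; lra.
Qed.

(* proj_along z u = Re(conj z * u): the component of u along z. *)
Definition proj_along (z u : C) : R := fst z * fst u + snd z * snd u.

Lemma proj_along_bound z u : Rabs (proj_along z u) <= Cmod z * Cmod u.
Proof.
  rewrite <- (Cmod_conj z), <- Cmod_mult.
  replace (proj_along z u) with (Re (Cconj z * u)) by (destruct z, u; unfold proj_along; simpl; ring).
  apply re_le_Cmod.
Qed.

Lemma proj_along_self z : proj_along z z = Cmod z ^ 2.
Proof. rewrite Cmod2_alt. unfold proj_along, Re, Im. ring. Qed.

Lemma proj_along_interp z (f : R -> C) t :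
  proj_along z (f t - P2 f t)%C
  = proj_along z (f t) - P2r (proj_along z (f 1)) (proj_along z (f 0)) (proj_along z (f (-1))) t.
Proof. unfold proj_along, P2, P2vals, P2r. simpl. ring. Qed.

Lemma proj_along_quotient z a b r : r <> 0 ->
  proj_along z ((a - b) / RtoC r)%C = (proj_along z a - proj_along z b) / r.
Proof.
  intros Hr. destruct z, a, b. unfold proj_along, Cdiv, Cinv, Cminus, Cplus, Copp, Cmult, RtoC.
  simpl. field. exact Hr.
Qed.

Lemma proj_along_continuous z u :
  filterlim (proj_along z) (locally u) (locally (proj_along z u)).
Proof.
  destruct u as [a b].
  apply (continuous_plus (K := R_AbsRing) (V := R_NormedModule)
           (fun v : C => fst z * fst v) (fun v : C => snd z * snd v)).
  - apply (continuous_mult (K := R_AbsRing) (fun _ : C => fst z) fst).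
    + apply continuous_const.
    + apply continuous_fst.
  - apply (continuous_mult (K := R_AbsRing) (fun _ : C => snd z) snd).
    + apply continuous_const.
    + apply continuous_snd.
Qed.

Lemma projection_deriv (f f' : R -> C) z : is_deriv_on_I11 f f' ->
  deriv_on_I11 (fun x => proj_along z (f x)) (fun x => proj_along z (f' x)).
Proof.
  intros Hf t Ht.
  apply (filterlim_within_ext _ (fun s => proj_along z ((f s - f t) / RtoC (s - t))%C)).
  - intros s [_ Hne]. apply proj_along_quotient. lra.
  - apply (filterlim_comp _ _ _ _ (proj_along z) _ (locally (f' t)));
      [apply Hf, Ht | apply proj_along_continuous].
Qed.

(* Pointwise error bound.  With z = f(t) - P2 f(t), the real function
   g = proj_along z o f is (|z| M)-Lipschitz and its interpolation error at t is
   |z|^2, hence |z|^2 <= sigma20 |z| M. *)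
Lemma interp_error_pointwise (f f' : R -> C) M t : is_deriv_on_I11 f f' ->
  (forall x, I11 x -> Cmod (f' x) <= M) -> I11 t ->
  Cmod (f t - P2 f t)%C <= sigma20 * M.
Proof.
  intros Hf HM Ht.
  set (z := (f t - P2 f t)%C). set (g := fun x => proj_along z (f x)).
  assert (Lip : forall a b, I11 a -> I11 b -> Rabs (g b - g a) <= Cmod z * M * Rabs (b - a)).
  { intros a b Ha Hb. apply (mean_value_ineq g (fun x => proj_along z (f' x))); auto.
    - apply projection_deriv, Hf.
    - intros x Hx. apply (Rle_trans _ _ _ (proj_along_bound z (f' x))).
      apply Rmult_le_compat_l; [apply Cmod_ge_0 | apply HM, Hx]. }
  assert (Key : g t - P2r (g 1) (g 0) (g (-1)) t = Cmod z ^ 2)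
    by (unfold g; rewrite <- proj_along_interp, proj_along_self; reflexivity).
  pose proof (lipschitz_interp_error g _ t Lip Ht) as Err. rewrite Key in Err.
  assert (HM0 : 0 <= M)
    by (apply (Rle_trans _ (Cmod (f' 0))); [apply Cmod_ge_0 | apply HM; unfold I11; lra]).
  pose proof sigma20_pos. pose proof (Cmod_ge_0 z). fold z.
  destruct (Req_dec (Cmod z) 0) as [Hz | Hz]; [rewrite Hz; apply Rmult_le_pos; lra |].
  apply (Rmult_le_reg_l (Cmod z)); [lra |]. lra.
Qed.

Lemma admissible_sigma20 : admissible_sigma sigma20.
Proof.
  intros f f' Hf Hc. destruct (continuous_on_I11_bounded f' Hc) as [m Hm].
  apply supnormC_le. intros t Ht. apply (interp_error_pointwise f f'); [exact Hf | | exact Ht].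
  intros x Hx. apply (supnormC_ge f' m x Hm Hx).
Qed.

Lemma RtoC_limit {T : Type} (F : (T -> Prop) -> Prop) (h : T -> R) l : Filter F ->
  filterlim h F (locally l) -> filterlim (fun x => RtoC (h x)) F (locally (RtoC l)).
Proof.
  intros HF Hh. apply filterlim_locally. intros eps.
  apply (filter_imp (fun x => ball l eps (h x))); [| apply (proj1 (filterlim_locally h l) Hh)].
  intros x Hx. split; [exact Hx | apply ball_center].
Qed.

Lemma derive_quotient_limit (F : R -> R) t l (D : R -> Prop) :
  is_derive F t l -> (forall s, D s -> s <> t) ->
  filterlim (fun s => (F s - F t) / (s - t)) (within D (locally t)) (locally l).
Proof.
  intros HF HD. apply filterlim_locally. intros [eps Heps].
  destruct (proj1 (is_derive_Reals F t l) HF eps Heps) as [d Hd].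
  exists d. intros s Hs Ds. change (Rabs ((F s - F t) / (s - t) - l) < eps).
  replace s with (t + (s - t)) at 1 by ring.
  apply Hd; [apply Rminus_eq_contra, HD, Ds | exact Hs].
Qed.

Lemma real_C1_complex (F F' : R -> R) :
  (forall x, is_derive F x (F' x)) -> (forall x, continuity_pt F' x) ->
  is_deriv_on_I11 (fun x => RtoC (F x)) (fun x => RtoC (F' x)) /\
  continuous_on_I11 (fun x => RtoC (F' x)).
Proof.
  intros HD HC. split; intros t _.
  - apply (filterlim_within_ext _ (fun s => RtoC ((F s - F t) / (s - t)))).
    + intros s [_ Hne]. rewrite RtoC_div, !RtoC_minus by lra. reflexivity.
    + apply RtoC_limit; [apply within_filter, locally_filter |].
      apply derive_quotient_limit; [apply HD | intros s [_ Hs]; exact Hs].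
  - apply RtoC_limit; [apply within_filter, locally_filter |].
    apply (filterlim_filter_le_1 _ (filter_le_within (F := locally t) I11)).
    apply continuity_pt_filterlim, HC.
Qed.

Lemma P2_RtoC (F : R -> R) t :
  P2 (fun x => RtoC (F x)) t = RtoC (P2r (F 1) (F 0) (F (-1)) t).
Proof. unfold P2, P2vals, P2r. rewrite !RtoC_plus, !RtoC_mult. reflexivity. Qed.

Lemma admissible_real_test sigma (F F' : R -> R) B t : admissible_sigma sigma ->
  (forall x, is_derive F x (F' x)) -> (forall x, continuity_pt F' x) ->
  (forall x, I11 x -> Rabs (F' x) <= 1) -> (forall x, I11 x -> Rabs (F x) <= B) -> I11 t ->
  F t - P2r (F 1) (F 0) (F (-1)) t <= Rmax sigma 0.
Proof.
  intros Hadm HD HC HF' HF Ht.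
  destruct (real_C1_complex F F' HD HC) as [Hd Hc].
  pose proof (Hadm _ _ Hd Hc) as Hsup.
  assert (Err : forall x, ((RtoC (F x)) - P2 (fun y => RtoC (F y)) x)%C
                          = RtoC (F x - P2r (F 1) (F 0) (F (-1)) x))
    by (intros x; rewrite P2_RtoC, RtoC_minus; reflexivity).
  assert (I1 : I11 1) by (unfold I11; lra).
  assert (I0 : I11 0) by (unfold I11; lra).
  assert (Im1 : I11 (-1)) by (unfold I11; lra).
  assert (Bnd : forall x, I11 x ->
      Cmod ((RtoC (F x)) - P2 (fun y => RtoC (F y)) x)%C <= B + 3 * B).
  { intros x Hx. rewrite Err, Cmod_R.
    apply (Rle_trans _ _ _ (Rabs_triang _ _)). rewrite Rabs_Ropp.
    apply Rplus_le_compat; [apply HF, Hx | apply P2r_bound; auto]. }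
  assert (Bnd' : forall x, I11 x -> Cmod (RtoC (F' x)) <= 1)
    by (intros x Hx; rewrite Cmod_R; apply HF', Hx).
  pose proof (supnormC_ge _ _ t Bnd Ht) as Hat. cbv beta in Hat. rewrite Err, Cmod_R in Hat.
  pose proof (supnormC_le _ _ Bnd') as S1.
  pose proof (supnormC_ge _ _ 0 Bnd' I0) as S0.
  pose proof (Cmod_ge_0 (RtoC (F' 0))).
  pose proof (Rle_abs (F t - P2r (F 1) (F 0) (F (-1)) t)).
  assert (sigma * supnormC (fun x => RtoC (F' x)) <= Rmax sigma 0)
    by (unfold Rmax; destruct Rle_dec; nra).
  lra.
Qed.

Definition smooth_abs (e u : R) : R := sqrt (u ^ 2 + e ^ 2).

Lemma smooth_abs_bounds e u : 0 <= e -> Rabs u <= smooth_abs e u <= Rabs u + e.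
Proof.
  intros He. unfold smooth_abs. pose proof (Rabs_pos u).
  assert (Hu2 : Rabs u ^ 2 = u ^ 2) by (rewrite RPow_abs; apply Rabs_right, Rle_ge, pow2_ge_0).
  split.
  - rewrite <- (sqrt_pow2 (Rabs u)) by lra. apply sqrt_le_1_alt. nra.
  - rewrite <- (sqrt_pow2 (Rabs u + e)) by lra. apply sqrt_le_1_alt. nra.
Qed.

Lemma smooth_abs_pos e u : 0 < e -> 0 < smooth_abs e u.
Proof. intros He. apply sqrt_lt_R0. nra. Qed.

Lemma smooth_abs_sq e u : smooth_abs e u ^ 2 = u ^ 2 + e ^ 2.
Proof. apply pow2_sqrt. nra. Qed.

(* The derivative of smooth_abs: a nondecreasing function with values in [-1,1]. *)
Definition slope (e u : R) : R := u / smooth_abs e u.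

Lemma slope_bound e u : 0 < e -> Rabs (slope e u) <= 1.
Proof.
  intros He. pose proof (smooth_abs_pos e u He). pose proof (smooth_abs_bounds e u (Rlt_le _ _ He)).
  unfold slope. rewrite Rabs_div, (Rabs_right (smooth_abs e u)) by lra.
  apply (Rmult_le_reg_r (smooth_abs e u)); [lra |].
  unfold Rdiv. rewrite Rmult_assoc, Rinv_l by lra. lra.
Qed.

(* Monotonicity on [0, oo): u sqrt(v^2 + e^2) <= v sqrt(u^2 + e^2), compared
   through squares. *)
Lemma slope_mono_nonneg e u v : 0 < e -> 0 <= u <= v -> slope e u <= slope e v.
Proof.
  intros He Huv. unfold slope.
  pose proof (smooth_abs_pos e u He) as A0. pose proof (smooth_abs_pos e v He) as B0.
  pose proof (smooth_abs_sq e u) as A2. pose proof (smooth_abs_sq e v) as B2.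
  set (A := smooth_abs e u) in *. set (B := smooth_abs e v) in *.
  assert (Sq : (u * B) ^ 2 <= (v * A) ^ 2).
  { replace ((u * B) ^ 2) with (u ^ 2 * B ^ 2) by ring.
    replace ((v * A) ^ 2) with (v ^ 2 * A ^ 2) by ring. rewrite A2, B2.
    assert (u ^ 2 <= v ^ 2) by nra.
    assert (0 <= (v ^ 2 - u ^ 2) * e ^ 2) by (apply Rmult_le_pos; [lra | apply pow2_ge_0]).
    lra. }
  assert (Cross : u * B <= v * A).
  { assert (0 <= u * B) by nra. assert (0 <= v * A) by nra. nra. }
  apply (Rmult_le_reg_r (A * B)); [nra |].
  replace (u / A * (A * B)) with (u * B) by (field; lra).
  replace (v / B * (A * B)) with (v * A) by (field; lra). exact Cross.
Qed.

Lemma slope_opp e u : slope e (- u) = - slope e u.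
Proof. unfold slope, smooth_abs. replace ((- u) ^ 2) with (u ^ 2) by ring. unfold Rdiv. ring. Qed.

Lemma slope_sign e u : 0 < e -> 0 <= u -> 0 <= slope e u.
Proof.
  intros He Hu. unfold slope. pose proof (smooth_abs_pos e u He).
  apply Rdiv_le_0_compat; lra.
Qed.

Lemma slope_mono e u v : 0 < e -> u <= v -> slope e u <= slope e v.
Proof.
  intros He Huv. destruct (Rle_dec 0 u) as [Hu | Hu].
  - apply slope_mono_nonneg; lra.
  - destruct (Rle_dec 0 v) as [Hv | Hv].
    + pose proof (slope_sign e (- u) He ltac:(lra)). pose proof (slope_sign e v He Hv).
      rewrite slope_opp in *. lra.
    + pose proof (slope_mono_nonneg e (- v) (- u) He ltac:(lra)). rewrite !slope_opp in *. lra.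
Qed.

(* Smoothing of the extremal function kink_fun below; its derivative test_deriv
   has modulus at most 1 because slope is nondecreasing with values in [-1,1]. *)
Definition test_fun (e x : R) : R := tstar - x + smooth_abs e x - smooth_abs e (x - tstar).

Definition test_deriv (e x : R) : R := -1 + slope e x - slope e (x - tstar).

Lemma test_fun_is_derive e x : 0 < e -> is_derive (test_fun e) x (test_deriv e x).
Proof.
  intros He. unfold test_fun, test_deriv, slope, smooth_abs. auto_derive.
  - pose proof (pow2_ge_0 (x - tstar)). repeat split; nra.
  - pose proof (smooth_abs_pos e x He). pose proof (smooth_abs_pos e (x - tstar) He).
    unfold smooth_abs in *.
    replace (x * (x * 1) + e * (e * 1)) with (x ^ 2 + e ^ 2) by ring.
    replace ((x + - tstar) * ((x + - tstar) * 1) + e * (e * 1)) with ((x - tstar) ^ 2 + e ^ 2) by ring.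
    field. lra.
Qed.

Lemma test_deriv_continuous e x : 0 < e -> continuity_pt (test_deriv e) x.
Proof.
  intros He.
  assert (Hd : ex_derive (test_deriv e) x).
  { unfold test_deriv, slope, smooth_abs. auto_derive.
    pose proof (pow2_ge_0 (x - tstar)).
    pose proof (smooth_abs_pos e x He). pose proof (smooth_abs_pos e (x - tstar) He).
    unfold smooth_abs in *.
    replace (x * (x * 1) + e * (e * 1)) with (x ^ 2 + e ^ 2) by ring.
    replace ((x + - tstar) * ((x + - tstar) * 1) + e * (e * 1)) with ((x - tstar) ^ 2 + e ^ 2) by ring.
    repeat split; nra. }
  destruct Hd as [l Hl]. apply derivable_continuous_pt. exists l. apply is_derive_Reals, Hl.
Qed.

Lemma test_deriv_bound e x : 0 < e -> Rabs (test_deriv e x) <= 1.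
Proof.
  intros He. unfold test_deriv.
  pose proof (slope_mono e (x - tstar) x He ltac:(pose proof tstar_bounds; lra)).
  pose proof (slope_bound e x He) as B1. pose proof (slope_bound e (x - tstar) He) as B2.
  apply Rabs_le_between in B1. apply Rabs_le_between in B2.
  apply Rabs_le. lra.
Qed.

(* The 1-Lipschitz extremal x |-> T - x + |x| - |x - T|, with values 2T - 1,
   0, 1, T at 1, 0, -1, T. *)
Definition kink_fun (x : R) : R := tstar - x + Rabs x - Rabs (x - tstar).

Lemma test_fun_near e x : 0 <= e -> Rabs (test_fun e x - kink_fun x) <= e.
Proof.
  intros He. unfold test_fun, kink_fun.
  pose proof (smooth_abs_bounds e x He). pose proof (smooth_abs_bounds e (x - tstar) He).
  apply Rabs_le. lra.
Qed.

Lemma kink_fun_bound x : I11 x -> Rabs (kink_fun x) <= 3.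
Proof.
  intros [Hx1 Hx2]. unfold kink_fun. pose proof tstar_bounds.
  assert (Diff : Rabs (Rabs x - Rabs (x - tstar)) <= tstar).
  { rewrite <- (Rabs_right tstar) at 2 by lra.
    replace tstar with (x - (x - tstar)) at 2 by ring. apply Rabs_triang_inv2. }
  apply Rabs_le_between in Diff. apply Rabs_le. lra.
Qed.

Lemma test_fun_bound e x : 0 <= e -> I11 x -> Rabs (test_fun e x) <= 3 + e.
Proof.
  intros He Hx. pose proof (kink_fun_bound x Hx). pose proof (test_fun_near e x He).
  pose proof (Rabs_triang (test_fun e x - kink_fun x) (kink_fun x)).
  replace (test_fun e x - kink_fun x + kink_fun x) with (test_fun e x) in * by ring. lra.
Qed.

(* The interpolation error of test_fun e at T is within 4e of that of kink_fun,
   which is sigma20: by linearity of P2r the perturbation costs at most e + 3e. *)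
Lemma test_fun_gap e : 0 <= e ->
  sigma20 - 4 * e <= test_fun e tstar - P2r (test_fun e 1) (test_fun e 0) (test_fun e (-1)) tstar.
Proof.
  intros He. pose proof tstar_bounds.
  set (d := fun x => test_fun e x - kink_fun x).
  assert (Hd : forall x, Rabs (d x) <= e) by (intros; apply test_fun_near, He).
  assert (Kink : kink_fun tstar - P2r (kink_fun 1) (kink_fun 0) (kink_fun (-1)) tstar = sigma20).
  { rewrite <- extremal_gap. unfold kink_fun.
    rewrite Rminus_diag, Rminus_0_l, Rminus_0_r, Rabs_Ropp, Rabs_R0, Rabs_R1, Rabs_m1,
      (Rabs_right tstar), (Rabs_right (1 - tstar)), (Rabs_left (-1 - tstar)) by lra.
    f_equal; [ring | f_equal; ring]. }
  assert (Split : test_fun e tstar - P2r (test_fun e 1) (test_fun e 0) (test_fun e (-1)) tstar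
      = (kink_fun tstar - P2r (kink_fun 1) (kink_fun 0) (kink_fun (-1)) tstar)
        + (d tstar - P2r (d 1) (d 0) (d (-1)) tstar)) by (unfold d, P2r; ring).
  pose proof (P2r_bound (d 1) (d 0) (d (-1)) tstar e (Hd 1) (Hd 0) (Hd (-1))
    ltac:(unfold I11; lra)) as HP.
  pose proof (Hd tstar) as HdT.
  apply Rabs_le_between in HP. apply Rabs_le_between in HdT.
  lra.
Qed.

(* No admissible constant is smaller than sigma20: letting e -> 0 in the test
   gives sigma20 <= max(sigma, 0), and sigma20 > 0. *)
Lemma sigma20_minimal sigma : admissible_sigma sigma -> sigma20 <= sigma.
Proof.
  intros Hadm. pose proof tstar_bounds.
  assert (Hmax : sigma20 <= Rmax sigma 0).
  { apply Rle_plus_epsilon. intros eps Heps.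
    assert (He : 0 < eps / 4) by lra.
    pose proof (test_fun_gap (eps / 4) (Rlt_le _ _ He)).
    pose proof (admissible_real_test sigma (test_fun (eps / 4)) (test_deriv (eps / 4))
      (3 + eps / 4) tstar Hadm (fun x => test_fun_is_derive _ x He)
      (fun x => test_deriv_continuous _ x He) (fun x _ => test_deriv_bound _ x He)
      (fun x Hx => test_fun_bound _ x (Rlt_le _ _ He) Hx) ltac:(unfold I11; lra)).
    lra. }
  pose proof sigma20_pos. unfold Rmax in Hmax. destruct Rle_dec; lra.
Qed.

Theorem theoremB5 :
  (* sigma_{2,0} = (14 sqrt 7 - 20)/27 is the smallest admissible constant *)
  (admissible_sigma ((14 * sqrt 7 - 20) / 27) /\
   (forall sigma, admissible_sigma sigma -> (14 * sqrt 7 - 20) / 27 <= sigma)) /\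
  (* equivalently, the max over t in [-1,1], y in Omega_2 equals that value *)
  ((forall y0 y1 y2 t, Omega2 y0 y1 y2 -> I11 t ->
      gap2 y0 y1 y2 t <= (14 * sqrt 7 - 20) / 27) /\
   (exists y0 y1 y2 t, Omega2 y0 y1 y2 /\ I11 t /\
      gap2 y0 y1 y2 t = (14 * sqrt 7 - 20) / 27)).
Proof.
  split; split.
  - exact admissible_sigma20.
  - exact sigma20_minimal.
  - exact gap2_le.
  - exact gap2_attained.
Qed.
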